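(* Let $(A,[\cdot,\cdot])$ be a Malcev algebra and let $r\in A\otimes A$ be skew-symmetric. Assume there exists a nondegenerate symmetric invariant bilinear form $B$ on $A$, and define $\varphi:A\to A^*$ by $\langle\varphi(x),y\rangle=B(x,y)$. Then $r$ is a solution of the Malcev Yang-Baxter equation in $A$ if and only if $\mathcal{R}=r\circ\varphi:A\to A$ is a Rota-Baxter operator of weight $0$ on $A$.
   Context: Field $\mathbb{K}$ of characteristic zero, finite-dimensional spaces. A Malcev algebra is a vector space with an anti-symmetric bracket satisfying $J(x,y,[x,z])=[J(x,y,z),x]$, $J(x,y,z)=[[x,y],z]+[[z,x],y]+[[y,z],x]$. $r\in A\otimes A$ is viewed as a map $r:A^*\to A$ by $\langle a^*,r(b^* )\rangle=\langle a^*\otimes b^*,r\rangle$; skew-symmetric means $r=-\sigma(r)$ with $\sigma(a\otimes b)=b\otimes a$. For $r=\sum_i x_i\otimes y_i$, $r$ solves the Malcev Yang-Baxter equation if $\sum_{i,j}[x_i,x_j]\otimes y_i\otimes y_j+\sum_{i,j}x_i\otimes[y_i,x_j]\otimes y_j+\sum_{i,j}x_i\otimes x_j\otimes[y_i,y_j]=0$. A symmetric bilinear form $B$ is invariant if $B([x,y],z)=B(x,[y,z])$. A Rota-Baxter operator of weight $0$ is a linear map $\mathcal{R}:A\to A$ with $[\mathcal{R}(x),\mathcal{R}(y)]=\mathcal{R}([\mathcal{R}(x),y]+[x,\mathcal{R}(y)])$ for all $x,y$. *)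

(* A finite-dimensional K-vector space A is coordinatized as
   'rV[K]_n (row vectors), with standard basis e_i = delta_mx 0 i.
   Tensors in A (x) A are represented by their coefficient matrices:
   r : 'M[K]_n stands for  \sum_(a,b) r a b *: (e_a (x) e_b). *)
From HB Require Import structures.
From mathcomp Require Import all_boot all_order all_algebra.
Set Implicit Arguments. Unset Strict Implicit. Unset Printing Implicit Defensive.
Import Order.TTheory GRing.Theory Num.Theory.
Local Open Scope ring_scope.

Section Defs.
Variables (K : fieldType) (n : nat).
Notation A := 'rV[K]_n.

Definition ebas (i : 'I_n) : A := delta_mx 0 i.

Definition bilinear_br (br : A -> A -> A) : Prop :=
  (forall (a : K) x y z, br (a *: x + y) z = a *: br x z + br y z) /\
  (forall (a : K) x y z, br x (a *: y + z) = a *: br x y + br x z).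

Definition bilinear_form (B : A -> A -> K) : Prop :=
  (forall (a : K) x y z, B (a *: x + y) z = a * B x z + B y z) /\
  (forall (a : K) x y z, B x (a *: y + z) = a * B x y + B x z).

Definition jacobian (br : A -> A -> A) (x y z : A) : A :=
  br (br x y) z + br (br z x) y + br (br y z) x.

Definition malcev (br : A -> A -> A) : Prop :=
  [/\ bilinear_br br,
      (forall x y, br x y = - br y x) &
      (forall x y z, jacobian br x y (br x z) = br (jacobian br x y z) x)].

(* skew-symmetry r = - sigma(r); sigma(r) has coefficient matrix r^T *)
Definition skew_tensor (r : 'M[K]_n) : Prop := r^T = - r.

(* coordinate (p,q,s) of the pure tensor x (x) y (x) z in A (x) A (x) A *)
Definition tens3 (x y z : A) (p q s : 'I_n) : K := x 0 p * y 0 q * z 0 s.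

(* Writing r = \sum_{(a,b)} x_(a,b) (x) y_(a,b) with x_(a,b) = r a b *: e_a and
   y_(a,b) = e_b, the coordinate (p,q,s) of
   \sum [x_i,x_j](x)y_i(x)y_j + x_i(x)[y_i,x_j](x)y_j + x_i(x)x_j(x)[y_i,y_j]. *)
Definition mybe_lhs (br : A -> A -> A) (r : 'M[K]_n) (p q s : 'I_n) : K :=
  \sum_(a < n) \sum_(b < n) \sum_(c < n) \sum_(d < n)
    let xi := r a b *: ebas a in let yi := ebas b in
    let xj := r c d *: ebas c in let yj := ebas d in
    (tens3 (br xi xj) yi yj p q s + tens3 xi (br yi xj) yj p q s
     + tens3 xi xj (br yi yj) p q s).

Definition malcev_YBE (br : A -> A -> A) (r : 'M[K]_n) : Prop :=
  forall p q s, mybe_lhs br r p q s = 0.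

(* r viewed as a map A^* -> A :  <e_i^*, r(f)> = <e_i^* (x) f, r>
   = \sum_j r i j * f(e_j), for a linear functional f : A -> K *)
Definition rmap (r : 'M[K]_n) (f : A -> K) : A :=
  \sum_(i < n) (\sum_(j < n) r i j * f (ebas j)) *: ebas i.

Definition phiB (B : A -> A -> K) (x : A) : A -> K := fun y => B x y.

Definition rota_baxter0 (br : A -> A -> A) (R : A -> A) : Prop :=
  forall x y, br (R x) (R y) = R (br (R x) y + br x (R y)).

End Defs.

(* Identify A^* with row vectors through the standard pairing [dot].  The
   (p,q,s)-coordinate of the Malcev Yang-Baxter expression is the value at
   (e_p, e_q, e_s) of the trilinear form
     F(xi, eta, zeta) = <xi, [r eta, r zeta]> + <eta, [r^t xi, r zeta]>
                        + <zeta, [r^t xi, r^t eta]>,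
   so r solves the equation iff F vanishes.  For skew r, symmetry of B gives
   B(u, R v) = - B(R u, v) with R = r o phi, and invariance then turns
   F(phi x, phi y, phi z) into B([R x, R y] - R([R x, y] + [x, R y]), z).
   As B is nondegenerate, phi is onto and F vanishes iff the Rota-Baxter
   identity holds. *)

From HB Require Import structures.
From mathcomp Require Import all_boot all_order all_algebra.
From mathcomp Require Import ring.
Set Implicit Arguments. Unset Strict Implicit. Unset Printing Implicit Defensive.
Import GRing.Theory.
Local Open Scope ring_scope.

Section IteratedSums.
Variable I : finType.

Lemma sum4_coord (V : nmodType) m p (M : I -> I -> I -> I -> 'M[V]_(m, p)) i j :
  (\sum_a \sum_b \sum_c \sum_d M a b c d) i j
  = \sum_a \sum_b \sum_c \sum_d M a b c d i j.
Proof.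
rewrite summxE; apply: eq_bigr => a _; rewrite summxE; apply: eq_bigr => b _.
by rewrite summxE; apply: eq_bigr => c _; rewrite summxE.
Qed.

Lemma sum4_split3 (V : nmodType) (f g h : I -> I -> I -> I -> V) :
  \sum_a \sum_b \sum_c \sum_d (f a b c d + g a b c d + h a b c d)
  = \sum_a \sum_b \sum_c \sum_d f a b c d
  + \sum_a \sum_b \sum_c \sum_d g a b c d
  + \sum_a \sum_b \sum_c \sum_d h a b c d.
Proof.
rewrite -!big_split; apply: eq_bigr => a _; rewrite -!big_split.
apply: eq_bigr => b _; rewrite -!big_split; apply: eq_bigr => c _.
by rewrite -!big_split.
Qed.

Lemma bilinear_sum2 (R : nzRingType) (U U' : lmodType R) (V : zmodType)
    (s s' : R -> V -> V) (f : {bilinear U -> U' -> V | s & s'})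
    (X : I -> I -> U) (Y : I -> I -> U') :
  f (\sum_a \sum_b X a b) (\sum_c \sum_d Y c d)
  = \sum_a \sum_b \sum_c \sum_d f (X a b) (Y c d).
Proof.
rewrite linear_sumlz; apply: eq_bigr => a _; rewrite linear_sumlz.
by apply: eq_bigr => b _; rewrite linear_sumr; apply: eq_bigr => c _;
   rewrite linear_sumr.
Qed.

End IteratedSums.

Section MalcevYBE.
Variables (K : fieldType) (n : nat).
Local Notation A := 'rV[K]_n.
Local Notation ebas := (@ebas K n).

Definition dot (u v : A) : K := (u *m v^T) 0 0.

Fact dot_is_bilinear : bilinear_for *%R *%R dot.
Proof.
split=> [w|w] c u v; rewrite /dot; last rewrite linearP /=.
  by rewrite mulmxDl -scalemxAl 2!mxE.
by rewrite mulmxDr -scalemxAr 2!mxE.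
Qed.
HB.instance Definition _ := bilinear_isBilinear.Build K A A K _ _ dot
  dot_is_bilinear.

Lemma dotC u v : dot u v = dot v u.
Proof. by rewrite /dot -[v in RHS]trmxK -trmx_mul !mxE. Qed.

Lemma dot_ebas i v : dot (ebas i) v = v 0 i.
Proof. by rewrite /dot /ebas -rowE !mxE. Qed.

Lemma row_linear_expand (f : A -> K) :
  (forall c u v, f (c *: u + v) = c * f u + f v) ->
  forall x, f x = \sum_i x 0 i * f (ebas i).
Proof.
move=> f_lin x.
have fD u v : f (u + v) = f u + f v by rewrite -[u in LHS]scale1r f_lin mul1r.
have f0 : f 0 = 0 by apply: (addrI (f 0)); rewrite -fD !addr0.
rewrite {1}(row_sum_delta x) (big_morph f fD f0); apply: eq_bigr => i _.
by rewrite -[_ *: _]addr0 f_lin f0 addr0.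
Qed.

Lemma row_linear_eq0 (f : A -> K) :
  (forall c u v, f (c *: u + v) = c * f u + f v) ->
  (forall i, f (ebas i) = 0) -> forall x, f x = 0.
Proof.
by move=> f_lin f_ebas x; rewrite (row_linear_expand f_lin) big1 // => i _;
   rewrite f_ebas mulr0.
Qed.

Lemma mulmx_tr_row_expand (r : 'M[K]_n) x :
  x *m r^T = \sum_a \sum_b (r a b * x 0 b) *: ebas a.
Proof.
rewrite [LHS]row_sum_delta; apply: eq_bigr => a _.
by rewrite -scaler_suml !mxE; congr (_ *: _); apply: eq_bigr => b _;
   rewrite !mxE mulrC.
Qed.

Lemma mulmx_row_expand (r : 'M[K]_n) x :
  x *m r = \sum_a \sum_b (x 0 a * r a b) *: ebas b.
Proof.
rewrite exchange_big [LHS]row_sum_delta; apply: eq_bigr => b _.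
by rewrite -scaler_suml !mxE.
Qed.

Variable br : A -> A -> A.
Hypothesis br_bilin : bilinear_br br.

Fact br_is_bilinear : bilinear_for *:%R *:%R br.
Proof. by case: br_bilin => brl brr; split=> w c u v; rewrite ?brl ?brr. Qed.
HB.instance Definition _ := bilinear_isBilinear.Build K A A A _ _ br
  br_is_bilinear.

Variable r : 'M[K]_n.

(* A functional eta is sent by r to eta *m r^T, and contracting the first leg
   of r with xi gives xi *m r. *)
Definition mybe_form (xi eta zeta : A) : K :=
  dot xi (br (eta *m r^T) (zeta *m r^T)) + dot eta (br (xi *m r) (zeta *m r^T))
  + dot zeta (br (xi *m r) (eta *m r)).

Lemma mybe_lhsE p q s :
  mybe_lhs br r p q s = mybe_form (ebas p) (ebas q) (ebas s).
Proof.
rewrite /mybe_form !dot_ebas !mulmx_tr_row_expand !mulmx_row_expand.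
rewrite !bilinear_sum2 !sum4_coord -sum4_split3; do 4!(apply: eq_bigr => ? _).
rewrite /tens3 /= !linearZl_LR !linearZr_LR !mxE.
by rewrite !(eq_sym p) !(eq_sym q) !(eq_sym s); ring.
Qed.

Lemma mybe_form_eq0 :
  (forall p q s, mybe_form (ebas p) (ebas q) (ebas s) = 0) ->
  forall xi eta zeta, mybe_form xi eta zeta = 0.
Proof.
move=> F0 xi eta zeta.
have linl eta' zeta' c u v : mybe_form (c *: u + v) eta' zeta'
    = c * mybe_form u eta' zeta' + mybe_form v eta' zeta'.
  by rewrite /mybe_form mulmxDl -scalemxAl !linearPl !linearPr /=; ring.
have linm xi' zeta' c u v : mybe_form xi' (c *: u + v) zeta'
    = c * mybe_form xi' u zeta' + mybe_form xi' v zeta'.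
  by rewrite /mybe_form !mulmxDl -!scalemxAl !linearPl !linearPr /=; ring.
have linr xi' eta' c u v : mybe_form xi' eta' (c *: u + v)
    = c * mybe_form xi' eta' u + mybe_form xi' eta' v.
  by rewrite /mybe_form mulmxDl -scalemxAl !linearPl !linearPr /=; ring.
move: xi; apply: (row_linear_eq0 (f := fun u => mybe_form u eta zeta)).
  exact: linl.
move=> p; move: eta; apply: (row_linear_eq0 (f := fun u => mybe_form _ u zeta)).
  exact: linm.
move=> q; move: zeta; apply: (row_linear_eq0 (f := mybe_form _ _)).
  exact: linr.
exact: F0.
Qed.

Lemma malcev_YBE_mybe_form :
  malcev_YBE br r <-> forall xi eta zeta, mybe_form xi eta zeta = 0.
Proof.
split=> [ybe | F0 p q s]; last by rewrite mybe_lhsE.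
by apply: mybe_form_eq0 => p q s; rewrite -mybe_lhsE; apply: ybe.
Qed.

Variable B : A -> A -> K.
Hypothesis B_bilin : bilinear_form B.

Fact B_is_bilinear : bilinear_for *%R *%R B.
Proof. by case: B_bilin => Bl Br; split=> w c u v; rewrite ?Bl ?Br. Qed.
HB.instance Definition _ := bilinear_isBilinear.Build K A A K _ _ B
  B_is_bilinear.

Definition gram : 'M[K]_n := \matrix_(i, j) B (ebas i) (ebas j).

Lemma gram_coord x j : B x (ebas j) = (x *m gram) 0 j.
Proof.
rewrite (row_linear_expand (f := B^~ (ebas j)) _ x); last first.
  by move=> *; rewrite linearPl.
by rewrite mxE; apply: eq_bigr => i _; rewrite mxE.
Qed.

Lemma form_gram x v : B x v = dot (x *m gram) v.
Proof.
rewrite (row_linear_expand (f := B x) _ v); last by move=> *; rewrite linearPr.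
rewrite dotC /dot mxE.
by apply: eq_bigr => j _; rewrite gram_coord [in RHS]mxE mulrC.
Qed.

Lemma rmap_phiB x : rmap r (phiB B x) = x *m gram *m r^T.
Proof.
rewrite [RHS]row_sum_delta /rmap; apply: eq_bigr => i _; congr (_ *: _).
rewrite mxE; apply: eq_bigr => j _.
by rewrite /phiB gram_coord [r^T _ _]mxE mulrC.
Qed.

Hypothesis B_nondeg : forall x, (forall y, B x y = 0) -> x = 0.

Lemma gram_unit : gram \in unitmx.
Proof.
rewrite -row_free_unit; apply/inj_row_free => v vG0; apply: B_nondeg => y.
by rewrite form_gram vG0 /dot mul0mx mxE.
Qed.

Hypothesis br_anti : forall x y, br x y = - br y x.
Hypothesis r_skew : skew_tensor r.
Hypothesis B_sym : forall x y, B x y = B y x.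
Hypothesis B_inv : forall x y z, B (br x y) z = B x (br y z).

Local Notation R x := (x *m gram *m r^T).

Lemma mulmx_skew (x : A) : x *m r = - (x *m r^T).
Proof. by rewrite r_skew mulmxN opprK. Qed.

Lemma form_R_skew u v : B u (R v) = - B (R u) v.
Proof.
rewrite form_gram [B (R u) v]B_sym form_gram [dot (v *m _) _]dotC -linearNl.
by rewrite -mulmx_skew /dot trmx_mul trmxK mulmxA.
Qed.

Lemma mybe_form_gram x y z :
  mybe_form (x *m gram) (y *m gram) (z *m gram)
  = B (br (R x) (R y) - R (br (R x) y + br x (R y))) z.
Proof.
rewrite /mybe_form !mulmx_skew !linearNl !linearNr opprK /= -!form_gram.
rewrite -(B_inv x) -(B_inv y) (B_sym z) !form_R_skew (br_anti y).
by rewrite !mulNmx !mulmxDl linearNl linearBl linearDl /=; ring.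
Qed.

Lemma rota_baxter0_mybe_form :
  rota_baxter0 br (fun x => rmap r (phiB B x)) <->
  forall x y z, mybe_form (x *m gram) (y *m gram) (z *m gram) = 0.
Proof.
split=> [RB x y z | F0 x y].
  by rewrite mybe_form_gram -!rmap_phiB RB subrr linear0l.
apply/eqP; rewrite -subr_eq0 !rmap_phiB; apply/eqP/B_nondeg => z.
by rewrite -mybe_form_gram.
Qed.

End MalcevYBE.

Theorem corollary2p7 (K : fieldType) (n : nat)
  (charK : [pchar K] =i pred0)
  (br : 'rV[K]_n -> 'rV[K]_n -> 'rV[K]_n) (r : 'M[K]_n)
  (B : 'rV[K]_n -> 'rV[K]_n -> K) :
  malcev br -> skew_tensor r ->
  bilinear_form B ->
  (forall x y, B x y = B y x) ->
  (forall x y z, B (br x y) z = B x (br y z)) ->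
  (forall x, (forall y, B x y = 0) -> x = 0) ->
  (malcev_YBE br r <-> rota_baxter0 br (fun x => rmap r (phiB B x))).
Proof.
move=> [br_bilin br_anti _] r_skew B_bilin B_sym B_inv B_nondeg.
have YBE_iff := malcev_YBE_mybe_form br_bilin r.
have RB_iff := rota_baxter0_mybe_form br_bilin B_bilin B_nondeg br_anti r_skew
  B_sym B_inv.
have gramK (xi : 'rV_n) : xi *m invmx (gram B) *m gram B = xi.
  exact: mulmxKV (gram_unit B_bilin B_nondeg) xi.
split=> [/YBE_iff F0 | /RB_iff F0].
  by apply/RB_iff => x y z; apply: F0.
apply/YBE_iff => xi eta zeta.
by rewrite -(gramK xi) -(gramK eta) -(gramK zeta) F0.
Qed.
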